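(* Let $R$ be a commutative ring with identity, $I,J$ ideals of $R$, and $N$ an injective cogenerator of the category of $R$-modules. If $N$ is $I$-reduced, then $N$ is $I$-coreduced. If $N$ is $(I,J)$-prime, then $N$ is $(I,J)$-coprime.
   Context: All rings are commutative with identity and modules are unital. An $R$-module $M$ is $I$-reduced if for all $m\in M$, $I^2m=0$ implies $Im=0$; $I$-coreduced if $IM=I^2M$; $(I,J)$-prime if for all $m\in M$, $IJm=0$ implies $Im=0$ or $Jm=0$; $(I,J)$-coprime if $IJM=IM$ or $IJM=JM$. *)

From HB Require Import structures.
From mathcomp Require Import all_boot all_order all_algebra.
Import GRing.Theory.
Local Open Scope ring_scope.

(* Modules over a commutative ring R are MathComp's [lmodType R]
   (unital by the axiom scale1r).  Ideals are Prop-valued subsets of R. *)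

Definition is_ideal {R : comPzRingType} (I : R -> Prop) : Prop :=
  [/\ I 0,
      (forall x y, I x -> I y -> I (x + y)) &
      (forall r x, I x -> I (r * x))].

Definition ideal_mul {R : comPzRingType} (I J : R -> Prop) : R -> Prop :=
  fun r => exists s : seq (R * R),
    (forall p, p \in s -> I p.1 /\ J p.2) /\ r = \sum_(p <- s) p.1 * p.2.

Definition ideal_smul {R : comPzRingType} (M : lmodType R) (I : R -> Prop)
    : M -> Prop :=
  fun x => exists s : seq (R * M),
    (forall p, p \in s -> I p.1) /\ x = \sum_(p <- s) p.1 *: p.2.

Definition ann_by {R : comPzRingType} {M : lmodType R} (I : R -> Prop) (m : M)
    : Prop := forall a, I a -> a *: m = 0.

Definition seteqP_ {T : Type} (A B : T -> Prop) : Prop := forall x, A x <-> B x.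

Definition I_reduced {R : comPzRingType} (M : lmodType R) (I : R -> Prop) : Prop :=
  forall m : M, ann_by (ideal_mul I I) m -> ann_by I m.

Definition I_coreduced {R : comPzRingType} (M : lmodType R) (I : R -> Prop) : Prop :=
  seteqP_ (ideal_smul M I) (ideal_smul M (ideal_mul I I)).

Definition IJ_prime {R : comPzRingType} (M : lmodType R) (I J : R -> Prop) : Prop :=
  forall m : M, ann_by (ideal_mul I J) m -> ann_by I m \/ ann_by J m.

Definition IJ_coprime {R : comPzRingType} (M : lmodType R) (I J : R -> Prop) : Prop :=
  seteqP_ (ideal_smul M (ideal_mul I J)) (ideal_smul M I) \/
  seteqP_ (ideal_smul M (ideal_mul I J)) (ideal_smul M J).

Definition injective_module {R : comPzRingType} (N : lmodType R) : Prop :=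
  forall (A B : lmodType R) (f : {linear A -> B}) (g : {linear A -> N}),
    injective f ->
    exists h : {linear B -> N}, forall a, h (f a) = g a.

(* N is a cogenerator of R-Mod: Hom(-, N) is faithful, i.e. for every nonzero
   R-linear map f : A -> B there is an R-linear g : B -> N with g o f <> 0. *)
Definition cogenerator_module {R : comPzRingType} (N : lmodType R) : Prop :=
  forall (A B : lmodType R) (f : {linear A -> B}),
    (exists a, f a <> 0) ->
    exists (g : {linear B -> N}) (a : A), g (f a) <> 0.

From HB Require Import structures.
From mathcomp Require Import all_boot all_order all_algebra.
From mathcomp Require Import generic_quotient.
From Stdlib Require Import ClassicalEpsilon Classical.
Import GRing.Theory.
Local Open Scope ring_scope.
Local Open Scope quotient_scope.

(* If x lies in PM but not in QM,
   then some linear map h : M -> N kills QM but not x (apply cogeneration to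
   r |-> r (x + QM) into M/QM); writing x = sum a_k m_k with a_k in P, some
   h m_k is annihilated by Q but not by P.  With P = I, Q = I^2 this
   contradicts I-reducedness of N.  If IJM differs from both IM and JM, we
   get m1, m2 in N annihilated by IJ, with I m1 <> 0 and J m2 <> 0;
   (I,J)-primeness forces J m1 = I m2 = 0, so m1 + m2 is annihilated by IJ
   but by neither I nor J. *)

Section QuotientModule.
Variables (R : comPzRingType) (M : lmodType R) (K : M -> Prop).
Hypotheses (K0 : K 0) (KD : forall x y, K x -> K y -> K (x + y))
  (KZ : forall a x, K x -> K (a *: x)).

Let KN x : K x -> K (- x).
Proof. by move=> Kx; rewrite -scaleN1r; apply: KZ. Qed.

Definition quotmod_rel (x y : M) : bool :=
  if excluded_middle_informative (K (x - y)) then true else false.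

Lemma quotmod_relP x y : reflect (K (x - y)) (quotmod_rel x y).
Proof. by rewrite /quotmod_rel; case: excluded_middle_informative; constructor. Qed.

Lemma quotmod_rel_refl : reflexive quotmod_rel.
Proof. by move=> x; apply/quotmod_relP; rewrite subrr. Qed.

Lemma quotmod_rel_sym : symmetric quotmod_rel.
Proof. by move=> x y; apply/quotmod_relP/quotmod_relP => /KN; rewrite opprB. Qed.

Lemma quotmod_rel_trans : transitive quotmod_rel.
Proof.
move=> y x z /quotmod_relP Kxy /quotmod_relP Kyz; apply/quotmod_relP.
by rewrite -(subrK y x) -addrA; apply: KD.
Qed.

Canonical quotmod_equiv :=
  EquivRel quotmod_rel quotmod_rel_refl quotmod_rel_sym quotmod_rel_trans.

Definition quotmod : Type := {eq_quot quotmod_equiv}.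
HB.instance Definition _ := Choice.on quotmod.
HB.instance Definition _ := Quotient.on quotmod.

Definition quotmod_pi (x : M) : quotmod := \pi_quotmod x.

Lemma quotmod_piP x y : quotmod_pi x = quotmod_pi y <-> K (x - y).
Proof.
have := @eqmodP _ quotmod_equiv x y; rewrite /quotmod_pi => eq_xy.
by split => [/eq_xy/quotmod_relP|/quotmod_relP/eq_xy].
Qed.

Lemma quotmod_ind (P : quotmod -> Prop) :
  (forall x, P (quotmod_pi x)) -> forall q, P q.
Proof. by move=> Ppi q; rewrite -(reprK q); apply: Ppi. Qed.

Lemma K_repr_pi x : K (repr (quotmod_pi x) - x).
Proof. by apply/quotmod_piP; rewrite /quotmod_pi reprK. Qed.

Definition quotmod_add (p q : quotmod) := quotmod_pi (repr p + repr q).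
Definition quotmod_opp (p : quotmod) := quotmod_pi (- repr p).
Definition quotmod_scale (a : R) (p : quotmod) := quotmod_pi (a *: repr p).

Lemma quotmod_addE x y :
  quotmod_add (quotmod_pi x) (quotmod_pi y) = quotmod_pi (x + y).
Proof. by apply/quotmod_piP; rewrite opprD addrACA; apply: KD; apply: K_repr_pi. Qed.

Lemma quotmod_oppE x : quotmod_opp (quotmod_pi x) = quotmod_pi (- x).
Proof. by apply/quotmod_piP; rewrite -opprD; apply/KN/K_repr_pi. Qed.

Lemma quotmod_scaleE a x :
  quotmod_scale a (quotmod_pi x) = quotmod_pi (a *: x).
Proof. by apply/quotmod_piP; rewrite -scalerBr; apply/KZ/K_repr_pi. Qed.

Lemma quotmod_addA : associative quotmod_add.
Proof.
by elim/quotmod_ind=> x; elim/quotmod_ind=> y; elim/quotmod_ind=> z;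
  rewrite !quotmod_addE addrA.
Qed.

Lemma quotmod_addC : commutative quotmod_add.
Proof.
by elim/quotmod_ind=> x; elim/quotmod_ind=> y; rewrite !quotmod_addE addrC.
Qed.

Lemma quotmod_add0 : left_id (quotmod_pi 0) quotmod_add.
Proof. by elim/quotmod_ind=> x; rewrite quotmod_addE add0r. Qed.

Lemma quotmod_addN : left_inverse (quotmod_pi 0) quotmod_opp quotmod_add.
Proof. by elim/quotmod_ind=> x; rewrite quotmod_oppE quotmod_addE addNr. Qed.

HB.instance Definition _ := GRing.isZmodule.Build quotmod
  quotmod_addA quotmod_addC quotmod_add0 quotmod_addN.

Lemma quotmod_piD x y : quotmod_pi x + quotmod_pi y = quotmod_pi (x + y).
Proof. exact: quotmod_addE. Qed.

Lemma quotmod_scaleA a b q :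
  quotmod_scale a (quotmod_scale b q) = quotmod_scale (a * b) q.
Proof. by elim/quotmod_ind: q => x; rewrite !quotmod_scaleE scalerA. Qed.

Lemma quotmod_scale1 : left_id 1 quotmod_scale.
Proof. by elim/quotmod_ind=> x; rewrite quotmod_scaleE scale1r. Qed.

Lemma quotmod_scaleDr : right_distributive quotmod_scale +%R.
Proof.
move=> a; elim/quotmod_ind=> x; elim/quotmod_ind=> y.
by rewrite quotmod_piD !quotmod_scaleE quotmod_piD scalerDr.
Qed.

Lemma quotmod_scaleDl q : {morph quotmod_scale^~ q : a b / a + b}.
Proof.
move=> a b; elim/quotmod_ind: q => x.
by rewrite !quotmod_scaleE quotmod_piD scalerDl.
Qed.

HB.instance Definition _ := GRing.Zmodule_isLmodule.Build R quotmod
  quotmod_scaleA quotmod_scale1 quotmod_scaleDr quotmod_scaleDl.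

Lemma quotmod_pi_linear : linear quotmod_pi.
Proof. by move=> a x y; rewrite -quotmod_piD -quotmod_scaleE. Qed.

HB.instance Definition _ :=
  GRing.isLinear.Build R M quotmod *:%R quotmod_pi quotmod_pi_linear.

Lemma quotmod_pi_eq0 x : quotmod_pi x = 0 <-> K x.
Proof. by rewrite -[0]/(quotmod_pi 0) quotmod_piP subr0. Qed.

End QuotientModule.

Section ScaleMap.
Variables (R : comPzRingType) (V : lmodType R) (v : V).

Definition scalev (r : R^o) : V := r *: v.

Lemma scalev_linear : linear scalev.
Proof. by move=> a x y; rewrite /scalev scalerDl scalerA. Qed.

HB.instance Definition _ :=
  GRing.isLinear.Build _ _ _ _ scalev scalev_linear.

End ScaleMap.

Lemma cogenerator_separates {R : comPzRingType} {M N : lmodType R}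
    {K : M -> Prop} :
  K 0 -> (forall x y, K x -> K y -> K (x + y)) ->
  (forall a x, K x -> K (a *: x)) ->
  cogenerator_module N -> forall x, ~ K x ->
  exists h : {linear M -> N}, h x <> 0 /\ forall y, K y -> h y = 0.
Proof.
move=> K0 KD KZ cogN x Kx; pose pi := @quotmod_pi R M K K0 KD KZ.
have [|g [r gr_neq0]] := cogN R^o _ (@scalev _ _ (pi x)).
  by exists 1 => /=; rewrite /scalev scale1r => /quotmod_pi_eq0.
exists (g \o pi); split=> [/= gx0|y Ky /=].
  by apply: gr_neq0; rewrite /scalev linearZ /= gx0 scaler0.
by have /quotmod_pi_eq0 -> := Ky; rewrite linear0.
Qed.

Section IdealSmul.
Context {R : comPzRingType} {M : lmodType R}.
Implicit Types (P Q I J : R -> Prop).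

Lemma ideal_smul0 P : ideal_smul M P 0.
Proof. by exists [::]; rewrite big_nil. Qed.

Lemma ideal_smulD P x y :
  ideal_smul M P x -> ideal_smul M P y -> ideal_smul M P (x + y).
Proof.
move=> [s [Ps ->]] [t [Pt ->]]; exists (s ++ t); rewrite big_cat.
by split=> // p; rewrite mem_cat => /orP [/Ps|/Pt].
Qed.

Lemma ideal_smulZ P a x : ideal_smul M P x -> ideal_smul M P (a *: x).
Proof.
move=> [s [Ps ->]]; exists [seq (p.1, a *: p.2) | p <- s]; split.
  by move=> _ /mapP [p /Ps Pp ->].
by rewrite big_map scaler_sumr; apply: eq_bigr => p _; rewrite /= !scalerA mulrC.
Qed.

Lemma ideal_smul_scale P a m : P a -> ideal_smul M P (a *: m).
Proof.
move=> Pa; exists [:: (a, m)]; rewrite big_seq1.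
by split=> // p; rewrite inE => /eqP ->.
Qed.

Lemma ideal_smul_sum P (T : eqType) (s : seq T) (F : T -> M) :
  (forall t, t \in s -> ideal_smul M P (F t)) ->
  ideal_smul M P (\sum_(t <- s) F t).
Proof.
elim: s => [|t s IHs] PF; first by rewrite big_nil; apply: ideal_smul0.
rewrite big_cons; apply: ideal_smulD; first by apply: PF; rewrite mem_head.
by apply: IHs => u su; apply: PF; rewrite inE su orbT.
Qed.

Lemma ideal_smul_mull I J x :
  ideal_smul M (ideal_mul I J) x -> ideal_smul M I x.
Proof.
move=> [s [IJs ->]]; apply: ideal_smul_sum => p /IJs [t [IJt ->]].
rewrite scaler_suml; apply: ideal_smul_sum => q /IJt [Iq _].
by rewrite -scalerA; apply: ideal_smul_scale.
Qed.

Lemma ideal_smul_mulr I J x :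
  ideal_smul M (ideal_mul I J) x -> ideal_smul M J x.
Proof.
move=> [s [IJs ->]]; apply: ideal_smul_sum => p /IJs [t [IJt ->]].
rewrite scaler_suml; apply: ideal_smul_sum => q /IJt [_ Jq].
by rewrite mulrC -scalerA; apply: ideal_smul_scale.
Qed.

Lemma ann_by_linear_kill {N : lmodType R} P (h : {linear M -> N}) m :
  (forall y, ideal_smul M P y -> h y = 0) -> ann_by P (h m).
Proof. by move=> hP a Pa; rewrite -linearZ hP //; apply: ideal_smul_scale. Qed.

Lemma ideal_smul_not_ann {N : lmodType R} {P} {h : {linear M -> N}} {x} :
  ideal_smul M P x -> h x <> 0 -> exists m, ~ ann_by P (h m).
Proof.
move=> [s [Ps ->]] hx_neq0; apply: NNPP => all_ann; apply: hx_neq0.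
rewrite raddf_sum big1_seq // => -[a m] /andP [_ sm]; rewrite /= linearZ.
exact: (not_ex_not_all _ _ all_ann m) _ (Ps _ sm).
Qed.

Lemma ann_byDr {N : lmodType R} {P} {m1 m2 : N} :
  ann_by P m2 -> (ann_by P (m1 + m2) <-> ann_by P m1).
Proof.
move=> ann2; split=> ann a Pa; have := ann a Pa;
  by rewrite scalerDr ann2 // addr0.
Qed.

Lemma ann_byDl {N : lmodType R} {P} {m1 m2 : N} :
  ann_by P m1 -> (ann_by P (m1 + m2) <-> ann_by P m2).
Proof. by rewrite addrC; apply: ann_byDr. Qed.

End IdealSmul.

Lemma cogenerator_ann_witness {R : comPzRingType} {M N : lmodType R}
    {P Q : R -> Prop} {x : M} :
  cogenerator_module N -> ideal_smul M P x -> ~ ideal_smul M Q x ->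
  exists m : N, ann_by Q m /\ ~ ann_by P m.
Proof.
move=> cogN Px Qx.
have [h [hx_neq0 hQ]] := cogenerator_separates (ideal_smul0 (M:=M) Q)
  (ideal_smulD (M:=M) Q) (ideal_smulZ (M:=M) Q) cogN _ Qx.
have [m not_ann] := ideal_smul_not_ann Px hx_neq0.
by exists (h m); split=> //; apply: ann_by_linear_kill.
Qed.

Section Cogenerator.
Variables (R : comPzRingType) (N : lmodType R) (I J : R -> Prop).
Hypothesis cogN : cogenerator_module N.

Lemma I_coreduced_of_cogenerator (M : lmodType R) :
  I_reduced N I -> I_coreduced M I.
Proof.
move=> redN x; split=> [Ix|]; last exact: ideal_smul_mull.
apply: NNPP => I2x.
have [m [ann2 not_ann]] := cogenerator_ann_witness cogN Ix I2x.
exact/not_ann/redN.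
Qed.

Lemma ideal_mul_ann_witness {M : lmodType R} {P : R -> Prop} :
  (forall x, ideal_smul M (ideal_mul I J) x -> ideal_smul M P x) ->
  ~ seteqP_ (ideal_smul M (ideal_mul I J)) (ideal_smul M P) ->
  exists m : N, ann_by (ideal_mul I J) m /\ ~ ann_by P m.
Proof.
move=> IJ_sub_P neqP; apply: NNPP => no_witness; apply: neqP => x.
split=> [|Px]; first exact: IJ_sub_P.
apply: NNPP => IJx; exact/no_witness/(cogenerator_ann_witness cogN Px IJx).
Qed.

Lemma IJ_coprime_of_cogenerator (M : lmodType R) :
  IJ_prime N I J -> IJ_coprime M I J.
Proof.
move=> primeN; apply: NNPP => /not_or_and [neqI neqJ].
have [m1 [ann1 not_annI1]] := ideal_mul_ann_witness (ideal_smul_mull I J) neqI.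
have [m2 [ann2 not_annJ2]] := ideal_mul_ann_witness (ideal_smul_mulr I J) neqJ.
have annJ1 : ann_by J m1 by case: (primeN _ ann1).
have annI2 : ann_by I m2 by case: (primeN _ ann2).
have [annI|annJ] := primeN _ ((ann_byDr ann2).2 ann1).
- exact/not_annI1/(ann_byDr annI2).
- exact/not_annJ2/(ann_byDl annJ1).
Qed.

End Cogenerator.

Theorem mainTheorem7 (R : comPzRingType) (I J : R -> Prop) (N : lmodType R) :
  is_ideal I -> is_ideal J ->
  injective_module N -> cogenerator_module N ->
  (I_reduced N I -> I_coreduced N I) /\
  (IJ_prime N I J -> IJ_coprime N I J).
Proof.
move=> _ _ _ cogN; split.
- exact: I_coreduced_of_cogenerator.
- exact: IJ_coprime_of_cogenerator.
Qed.
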